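(* Let $G=(U\cup W,E)$ be a connected bipartite graph with bipartition $U,W$ and $|U|<|W|$. Then the following are equivalent: (i) $G$ is an edge-stable equimatchable graph; (ii) every vertex of $U$ is square-strong; (iii) for every $u\in U$ there exists a nonempty set $S\subseteq N(u)$ such that $|N(S)|\le |S|-1$.
   Context: All graphs are finite and simple. A graph is equimatchable if all its maximal matchings have the same cardinality; an equimatchable graph $G$ is edge-stable if $G\setminus e$ (delete edge $e$, keep vertices) is equimatchable for every $e\in E(G)$. A vertex $v$ of a graph $G$ is strong if every maximal matching of $G$ saturates $v$ (i.e. $v$ is an endpoint of an edge of the matching). A strong vertex $v$ is square-strong if for every $u\in N(v)$, $v$ is strong in $G-u$. $N(u)$ is the neighborhood of $u$, and for a set $S$, $N(S)$ is the union of the neighborhoods of vertices of $S$. *)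

(* A finite simple graph on a finType T is given by a
   symmetric irreflexive relation e; its edge set is a set of 2-subsets. *)
From mathcomp Require Import all_boot.
Set Implicit Arguments. Unset Strict Implicit. Unset Printing Implicit Defensive.

Definition edges (T : finType) (e : rel T) : {set {set T}} :=
  [set [set p.1; p.2] | p in [set p : T * T | e p.1 p.2]].

Definition is_matching (T : finType) (E M : {set {set T}}) : Prop :=
  M \subset E /\ trivIset M.

Definition maximal_matching (T : finType) (E M : {set {set T}}) : Prop :=
  is_matching E M /\
  forall M', is_matching E M' -> M \subset M' -> M' = M.

Definition equimatchable (T : finType) (E : {set {set T}}) : Prop :=
  forall M1 M2, maximal_matching E M1 -> maximal_matching E M2 -> #|M1| = #|M2|.

Definition del_edge (T : finType) (E : {set {set T}}) (f : {set T}) := E :\ f.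

Definition del_vertex (T : finType) (E : {set {set T}}) (u : T) :=
  [set f in E | u \notin f].

Definition edge_stable (T : finType) (E : {set {set T}}) : Prop :=
  equimatchable E /\ forall f, f \in E -> equimatchable (del_edge E f).

Definition saturates (T : finType) (M : {set {set T}}) (v : T) := v \in cover M.

Definition strong (T : finType) (E : {set {set T}}) (v : T) : Prop :=
  forall M, maximal_matching E M -> saturates M v.

Definition nbhd (T : finType) (E : {set {set T}}) (v : T) : {set T} :=
  [set w | [set v; w] \in E].

Definition nbhd_set (T : finType) (E : {set {set T}}) (S : {set T}) : {set T} :=
  \bigcup_(s in S) nbhd E s.

Definition square_strong (T : finType) (E : {set {set T}}) (v : T) : Prop :=
  strong E v /\ forall u, u \in nbhd E v -> strong (del_vertex E u) v.

Definition connected_graph (T : finType) (e : rel T) : Prop :=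
  forall x y, connect e x y.

Definition bipartition (T : finType) (e : rel T) (U W : {set T}) : Prop :=
  U :&: W = set0 /\ U :|: W = setT /\
  forall x y, e x y -> (x \in U /\ y \in W) \/ (x \in W /\ y \in U).

From mathcomp Require Import all_boot zify.
Set Implicit Arguments. Unset Strict Implicit. Unset Printing Implicit Defensive.

(* For u in U, Hall's theorem shows that u is strong iff N(u) cannot be matched
   into U - u, i.e. iff some nonempty S of N(u) has |N(S)| <= |S| (u itself lies
   in N(S)).  Hence (iii) gives (ii) by deleting a neighbour from such an S; for
   the converse, a minimal S with |N(S)| <= |S| and the set S' witnessing that u
   stays strong after deleting some x of S meet, by submodularity of |N(.)|, in a
   smaller such set.
   An equimatchable connected bipartite graph with |U| < |W| has every maximal
   matching covering U: otherwise the vertices of U reachable by alternating paths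
   from an uncovered vertex of U, together with their neighbours, are left by an
   edge along which two matching edges can be traded for one, keeping maximality.
   So under (i) a maximal matching of G - w missing u extends to a maximal
   matching of G \ uw smaller than one covering U; under (ii) a maximal matching
   of G or G \ e covers U, since otherwise it is maximal in G - w for a neighbour
   w of an uncovered u. *)

Section SetFacts.
Variable T : finType.
Implicit Types (A B : {set T}) (P : {set {set T}}).

Lemma trivIset_eq P A B x :
  trivIset P -> A \in P -> B \in P -> x \in A -> x \in B -> A = B.
Proof. by move=> tP PA PB xA xB; rewrite -(def_pblock tP PA xA) (def_pblock tP PB xB). Qed.

Lemma trivIset_eqP P :
  reflect (forall A B x, A \in P -> B \in P -> x \in A -> x \in B -> A = B) (trivIset P).
Proof.
apply: (iffP idP) => [tP A B x|meetE]; first exact: trivIset_eq.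
apply/trivIsetP=> A B PA PB; apply: contraR => /pred0Pn[x /andP[xA xB]].
by rewrite (meetE A B x).
Qed.

Lemma coverU1 A P : cover (A |: P) = A :|: cover P.
Proof. by rewrite /cover bigcup_setU big_set1. Qed.

Lemma bigcupDr (I : finType) (J : {set I}) (F : I -> {set T}) B :
  \bigcup_(i in J) (F i :\: B) = (\bigcup_(i in J) F i) :\: B.
Proof.
apply/setP=> x; rewrite inE; apply/bigcupP/andP => [[i Ji]|[xB /bigcupP[i Ji xF]]].
  by case/setDP=> xF xB; split=> //; apply/bigcupP; exists i.
by exists i; rewrite // inE xB.
Qed.

Lemma connect_cross (e : rel T) A x y :
  connect e x y -> x \in A -> y \notin A -> exists p q, [/\ p \in A, q \notin A & e p q].
Proof.
case/connectP=> s + ->; elim: s x => [|z s IH] x /=; first by move=> _ ->.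
case/andP=> exz es xA; have [zA|zA] := boolP (z \in A); first exact: IH.
by move=> _; exists x, z.
Qed.

End SetFacts.

(** * Hall's theorem *)

Section Hall.
Variable T : finType.
Implicit Types (A S X : {set T}) (Nb : T -> {set T}).

Definition hall_cond Nb A :=
  forall S, S \subset A -> #|S| <= #|\bigcup_(s in S) Nb s|.

Definition has_sdr Nb A :=
  exists2 f : T -> T, {in A &, injective f} & {in A, forall a, f a \in Nb a}.

Lemma hall_condS Nb A X : X \subset A -> hall_cond Nb A -> hall_cond Nb X.
Proof. by move=> sXA hA S sSX; apply/hA/(subset_trans sSX). Qed.

Lemma has_sdr_glue Nb A S (f : T -> T) :
  S \subset A -> {in S &, injective f} -> {in S, forall a, f a \in Nb a} ->
  has_sdr (fun a => Nb a :\: f @: S) (A :\: S) -> has_sdr Nb A.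
Proof.
move=> sSA injf fNb [g injg gNb].
have inAS a : a \in A -> a \notin S -> a \in A :\: S by move=> aA aS; rewrite inE aS aA.
have gS a : a \in A :\: S -> g a \notin f @: S by move/gNb/setDP=> [].
exists (fun a => if a \in S then f a else g a) => [a b aA bA|a aA] /=.
  case: ifPn => aS; case: ifPn => bS; first exact: injf.
  - by move=> fg; case/negP: (gS b (inAS b bA bS)); rewrite -fg imset_f.
  - by move=> gf; case/negP: (gS a (inAS a aA aS)); rewrite gf imset_f.
  - by apply: injg; rewrite inE ?aS ?bS.
by case: ifPn => aS; [exact: fNb | have /gNb/setDP[] := inAS a aA aS].
Qed.

Section HallStep.
Variable n : nat.
Hypothesis IH : forall Nb A, #|A| < n -> hall_cond Nb A -> has_sdr Nb A.

Lemma hall_tight_step Nb A S : #|A| <= n -> hall_cond Nb A ->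
  S != set0 -> S \proper A -> #|\bigcup_(s in S) Nb s| <= #|S| -> has_sdr Nb A.
Proof.
move=> leAn hA nzS ltSA tightS; have sSA := proper_sub ltSA.
set NS := \bigcup_(s in S) Nb s in tightS.
have [f injf fNb] : has_sdr Nb S.
  exact: IH (leq_trans (proper_card ltSA) leAn) (hall_condS sSA hA).
have hallD : hall_cond (fun a => Nb a :\: NS) (A :\: S).
  move=> X sX; rewrite bigcupDr; set NX := \bigcup_(s in X) Nb s.
  have XS0 : X :&: S = set0.
    by apply/setP=> x; rewrite !inE; apply/andP=> -[/(subsetP sX)/setDP[_ /negP]].
  have := hA (X :|: S); rewrite subUset sSA (subset_trans sX (subsetDl _ _)).
  move/(_ isT); rewrite bigcup_setU -/NX -/NS.
  have := cardsUI X S; have := cardsUI NX NS; have := cardsD NX NS.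
  have := subset_leq_card (subsetIl NX NS); rewrite XS0 cards0; lia.
have [g injg gNb] : has_sdr (fun a => Nb a :\: NS) (A :\: S).
  apply: IH hallD; rewrite cardsD (setIidPr sSA).
  have : 0 < #|S| by rewrite card_gt0.
  have := subset_leq_card sSA; lia.
apply: (has_sdr_glue sSA injf fNb); exists g => // a /gNb; apply/subsetP.
apply/setDS/subsetP=> _ /imsetP[s sS ->]; apply/bigcupP; exists s => //.
exact: fNb.
Qed.

Lemma hall_slack_step Nb A a : #|A| <= n -> hall_cond Nb A -> a \in A ->
  (forall S, S != set0 -> S \proper A -> #|S| < #|\bigcup_(s in S) Nb s|) ->
  has_sdr Nb A.
Proof.
move=> leAn hA aA slack; have sa : [set a] \subset A by rewrite sub1set.
have [b bNa] : exists b, b \in Nb a.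
  by apply/card_gt0P; have := hA _ sa; rewrite big_set1 cards1.
have hallD : hall_cond (fun x => Nb x :\: (fun=> b) @: [set a]) (A :\: [set a]).
  move=> X sX; rewrite imset_set1 bigcupDr.
  have [->|nzX] := eqVneq X set0; first by rewrite cards0.
  have ltXA : X \proper A.
    rewrite properE (subset_trans sX (subsetDl _ _)); apply/subsetPn; exists a => //.
    by apply/negP=> /(subsetP sX); rewrite !inE eqxx.
  have := slack X nzX ltXA; rewrite (cardsD1 b (\bigcup_(s in X) Nb s)); lia.
apply: (has_sdr_glue sa _ _ (IH _ hallD)).
- by move=> x y; rewrite !inE => /eqP-> /eqP->.
- by move=> x; rewrite inE => /eqP->.
- by move: leAn; rewrite (cardsD1 a A) aA.
Qed.

End HallStep.

Theorem hall Nb A : hall_cond Nb A -> has_sdr Nb A.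
Proof.
elim: {A}_.+1 Nb {-2}A (ltnSn #|A|) => // n IH Nb A leAn hA.
have [->|[a aA]] := set_0Vmem A; first by exists id => x; rewrite inE.
case: (boolP [exists S : {set T}, [&& S != set0, S \proper A &
                 #|\bigcup_(s in S) Nb s| <= #|S|]]).
  by case/existsP=> S /and3P[nzS ltSA tightS]; exact: (hall_tight_step IH) tightS.
move/existsPn=> slack; apply: (hall_slack_step IH leAn hA aA) => S nzS ltSA.
by rewrite ltnNge; have := slack S; rewrite nzS ltSA.
Qed.

End Hall.

(** * Matchings *)

Section Matchings.
Variables (T : finType) (e : rel T).
Hypotheses (e_sym : symmetric e) (e_irr : irreflexive e).
Local Notation E := (edges e).
Implicit Types (M : {set {set T}}) (B : {set T}).

Lemma edgesP B : reflect (exists p q, e p q /\ B = [set p; q]) (B \in E).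
Proof.
apply: (iffP imsetP) => [[[p q]]|[p [q [epq ->]]]]; last by exists (p, q); rewrite ?inE.
by rewrite inE => epq ->; exists p, q.
Qed.

Lemma mem_edges2 p q : ([set p; q] \in E) = e p q.
Proof.
apply/edgesP/idP => [[p' [q' [epq' Epq]]]|epq]; last by exists p, q.
have pE : p' \in [set p; q] by rewrite Epq set21.
have qE : q' \in [set p; q] by rewrite Epq set22.
by move: epq'; case/set2P: pE => ->; case/set2P: qE => ->; rewrite ?e_irr // e_sym.
Qed.

Lemma matching_edge (E' : {set {set T}}) M B :
  E' \subset E -> is_matching E' M -> B \in M -> exists p q, e p q /\ B = [set p; q].
Proof. by move=> sE [sM _] MB; apply/edgesP/(subsetP sE)/(subsetP sM). Qed.

Lemma matchingU1 (E' : {set {set T}}) M p q : is_matching E' M -> [set p; q] \in E' ->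
  p \notin cover M -> q \notin cover M ->
  is_matching E' ([set p; q] |: M) /\ #|[set p; q] |: M| = #|M|.+1.
Proof.
move=> [sM tM] pqE pM qM; have pqM : [set p; q] \notin M.
  by apply: contra pM => pqM; apply/bigcupP; exists [set p; q]; rewrite ?set21.
rewrite cardsU1 pqM; split=> //; split; first by rewrite subUset sub1set pqE.
apply: trivIsetU (trivIset1 _) tM _; rewrite cover1 disjoint_subset.
by apply/subsetP=> x /set2P[]->; rewrite inE.
Qed.

Lemma matchingD1 (E' : {set {set T}}) M B : is_matching E' M -> B \in M ->
  [/\ is_matching E' (M :\ B), cover (M :\ B) = cover M :\: B & #|M| = #|M :\ B|.+1].
Proof.
move=> [sM tM] MB; split; last by rewrite (cardsD1 B M) MB.
  by split; [apply: subset_trans (subsetDl _ _) sM | apply: trivIsetD].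
exact: coverD1.
Qed.

Lemma matching_exchange (E' : {set {set T}}) M B p q :
  is_matching E' M -> B \in M -> [set p; q] \in E' ->
  p \notin cover M :\: B -> q \notin cover M :\: B ->
  [/\ is_matching E' ([set p; q] |: (M :\ B)),
      cover ([set p; q] |: (M :\ B)) = [set p; q] :|: (cover M :\: B) &
      #|[set p; q] |: (M :\ B)| = #|M|].
Proof.
move=> hM MB pqE; have [hD coverD cardD] := matchingD1 hM MB; rewrite -coverD => pD qD.
have [hU cardU] := matchingU1 hD pqE pD qD.
by split; rewrite // ?coverU1 ?coverD // cardU cardD.
Qed.

Lemma sup_matching_mem (E1 E2 : {set {set T}}) M M' B :
  E2 \subset E -> is_matching E2 M' -> M \subset M' ->
  (forall p q, [set p; q] \in E1 -> (p \in cover M) || (q \in cover M)) ->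
  B \in M' -> B \in E1 -> B \in M.
Proof.
move=> sE hM' sMM' coverE1 M'B BE1; have [p [q [_ defB]]] := matching_edge sE hM' M'B.
have inB x : x \in cover M -> x \in B -> B \in M.
  case/bigcupP=> B' MB' xB' xB.
  by rewrite (trivIset_eq hM'.2 M'B (subsetP sMM' _ MB') xB xB').
move: (coverE1 p q); rewrite -defB => /(_ BE1)/orP[]/inB; apply.
  by rewrite defB set21.
by rewrite defB set22.
Qed.

Definition maximum_matching (E' : {set {set T}}) M :=
  is_matching E' M /\ forall M', is_matching E' M' -> #|M'| <= #|M|.

Lemma maximal_matchingP (E' : {set {set T}}) M : E' \subset E ->
  maximal_matching E' M <->
  is_matching E' M /\ (forall p q, [set p; q] \in E' -> (p \in cover M) || (q \in cover M)).
Proof.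
move=> sE; split=> [[hM maxM]|[hM coverE]].
  split=> // p q pqE; apply/norP=> -[pM qM].
  have [hM' _] := matchingU1 hM pqE pM qM.
  move/negP: pM; apply; apply/bigcupP; exists [set p; q]; last exact: set21.
  by rewrite -(maxM _ hM' (subsetUr _ _)) setU11.
split=> // M' hM' sMM'; apply/eqP; rewrite eqEsubset sMM' andbT.
apply/subsetP=> B M'B; apply: (sup_matching_mem sE hM' sMM' coverE) => //.
exact: subsetP hM'.1 B M'B.
Qed.

Lemma maximal_matching_sup (E' : {set {set T}}) M : is_matching E' M ->
  exists2 M', maximal_matching E' M' & M \subset M'.
Proof.
move=> [sM tM].
pose P M' := [&& M' \subset E', trivIset M' & M \subset M'].
have PM : P M by rewrite /P sM tM subxx.
case: (arg_maxnP (fun M' => #|M'|) PM) => M' /and3P[sM' tM' sMM'] maxM'.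
exists M' => //; split=> // M'' [sM'' tM''] sM'M''; apply/eqP.
rewrite eq_sym eqEcard sM'M'' [_ <= _]maxM' // /P sM'' tM''.
exact: subset_trans sM'M''.
Qed.

Lemma equimatchable_maximum (E' : {set {set T}}) M :
  equimatchable E' -> maximal_matching E' M -> maximum_matching E' M.
Proof.
move=> eqE maxM; split=> [|M' hM']; first exact: maxM.1.
have [M'' maxM'' sM'M''] := maximal_matching_sup hM'.
by rewrite -(eqE _ _ maxM'' maxM) subset_leq_card.
Qed.

Lemma maximal_del_edge (E' : {set {set T}}) M f v : E' \subset E ->
  maximal_matching (del_edge E' f) M -> v \in f -> v \in cover M -> maximal_matching E' M.
Proof.
move=> sE /(maximal_matchingP _ (subset_trans (subsetDl _ _) sE))[[sM tM] coverD] vf vM.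
apply/(maximal_matchingP _ sE); split=> [|p q pqE].
  by split=> //; apply: subset_trans sM (subsetDl _ _).
have [pqf|pqf] := eqVneq [set p; q] f; last by apply: coverD; rewrite !inE pqf.
by move: vf vM; rewrite -pqf => /set2P[]-> ->; rewrite ?orbT.
Qed.

Lemma maximal_del_edge_del_vertex (E' : {set {set T}}) M f w : E' \subset E ->
  maximal_matching (del_edge E' f) M -> w \in f -> w \notin cover M ->
  maximal_matching (del_vertex E' w) M.
Proof.
move=> sE /(maximal_matchingP _ (subset_trans (subsetDl _ _) sE))[[sM tM] coverD] wf wM.
have sV : del_vertex E' w \subset E by apply: subset_trans sE; apply/subsetP=> B /setIdP[].
apply/(maximal_matchingP _ sV); split=> [|p q].
  split=> //; apply/subsetP=> B MB.
  rewrite inE (subsetP (subsetDl E' [set f]) _ (subsetP sM B MB)).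
  by apply: contra wM => wB; apply/bigcupP; exists B.
rewrite inE => /andP[pqE wpq]; apply: coverD; rewrite !inE pqE andbT.
by apply: contraNneq wpq => ->.
Qed.

Lemma maximal_matching_del_edge (E' : {set {set T}}) M f : E' \subset E ->
  maximal_matching E' M -> f \notin M -> maximal_matching (del_edge E' f) M.
Proof.
move=> sE /(maximal_matchingP _ sE)[[sM tM] coverE] fM.
apply/(maximal_matchingP _ (subset_trans (subsetDl _ _) sE)); split=> [|p q].
  split=> //; apply/subsetP=> B MB; rewrite !inE (subsetP sM B MB) andbT.
  by apply: contraNneq fM => <-.
by case/setD1P=> _; apply: coverE.
Qed.

Lemma card_cover_side (E' : {set {set T}}) M (X : {set T}) :
  E' \subset E -> is_matching E' M -> (forall p q, e p q -> (p \in X) != (q \in X)) ->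
  #|cover M :&: X| = #|M|.
Proof.
move=> sE hM sideX.
have onX B : B \in M -> exists2 x, x \in B & x \in X.
  move=> MB; have [p [q [epq defB]]] := matching_edge sE hM MB.
  rewrite defB; have [pX|pX] := boolP (p \in X); first by exists p; rewrite ?set21.
  exists q; rewrite ?set22 //.
  by move: (sideX _ _ epq); rewrite (negbTE pX); case: (q \in X).
have inj : {in cover M :&: X &, injective (pblock M)}.
  move=> x y /setIP[xM xX] /setIP[yM yX] eq_xy.
  have MB := pblock_mem xM.
  have [p [q [epq defB]]] := matching_edge sE hM MB.
  move: (mem_pblock M x) (mem_pblock M y) xX yX (sideX _ _ epq).
  by rewrite -eq_xy xM yM defB => /set2P[]-> /set2P[]-> // -> ->.
rewrite -(card_in_imset inj); apply/eq_card=> B.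
apply/imsetP/idP=> [[x /setIP[xM _] ->]|MB]; first exact: pblock_mem.
have [x xB xX] := onX B MB; exists x; last by rewrite (def_pblock hM.2 MB xB).
by rewrite inE xX andbT; apply/bigcupP; exists B.
Qed.

Definition mate M x := odflt x [pick y | [set x; y] \in M].

Section Mate.
Variables (E' : {set {set T}}) (M : {set {set T}}).
Hypotheses (sE : E' \subset E) (hM : is_matching E' M).

Lemma mateP x : x \in cover M -> [set x; mate M x] \in M.
Proof.
case/bigcupP=> B MB xB; rewrite /mate; case: pickP => // noMate.
have [p [q [_ defB]]] := matching_edge sE hM MB.
move: xB; rewrite defB => /set2P[] xpq.
  by move: (noMate q) => /=; rewrite xpq -defB MB.
by move: (noMate p) => /=; rewrite xpq setUC -defB MB.
Qed.

Lemma mate_edge x : x \in cover M -> e x (mate M x).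
Proof. by move/mateP/(subsetP hM.1)/(subsetP sE); rewrite mem_edges2. Qed.

Lemma mate_cover x : x \in cover M -> mate M x \in cover M.
Proof. by move=> xM; apply/bigcupP; exists [set x; mate M x]; rewrite ?set22 ?mateP. Qed.

Lemma mate_eq x y : [set x; y] \in M -> mate M x = y.
Proof.
move=> Mxy; have xM : x \in cover M by apply/bigcupP; exists [set x; y]; rewrite ?set21.
have eqB := trivIset_eq hM.2 Mxy (mateP xM) (set21 x y) (set21 _ _).
have : mate M x \in [set x; y] by rewrite eqB set22.
by case/set2P=> // mx; have := mate_edge xM; rewrite mx e_irr.
Qed.

Lemma mateK x : x \in cover M -> mate M (mate M x) = x.
Proof. by move=> xM; apply: mate_eq; rewrite setUC mateP. Qed.

End Mate.

End Matchings.

(** * Neighbourhoods and strong vertices *)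

Section Neighbourhoods.
Variables (T : finType) (E' : {set {set T}}).
Implicit Type S : {set T}.

Lemma mem_nbhd_sym v w : (w \in nbhd E' v) = (v \in nbhd E' w).
Proof. by rewrite !inE setUC. Qed.

Lemma nbhd_set_center u S : S != set0 -> S \subset nbhd E' u -> u \in nbhd_set E' S.
Proof.
case/set0Pn=> s sS /subsetP/(_ s sS) usE.
by apply/bigcupP; exists s; rewrite // -mem_nbhd_sym.
Qed.

Lemma nbhd_setS S1 S2 : S1 \subset S2 -> nbhd_set E' S1 \subset nbhd_set E' S2.
Proof. by move=> sS12; apply/bigcupsP=> s /(subsetP sS12) sS2; apply: bigcup_sup. Qed.

Lemma del_vertex_sub w : del_vertex E' w \subset E'.
Proof. by apply/subsetP=> B; rewrite inE => /andP[]. Qed.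

Lemma nbhd_del_vertex w v : v != w -> nbhd (del_vertex E' w) v = nbhd E' v :\ w.
Proof.
move=> vw; apply/setP=> t; rewrite !inE negb_or eq_sym vw andbC.
by rewrite [w == t]eq_sym.
Qed.

Lemma nbhd_set_del_vertex w S : w \notin S ->
  nbhd_set (del_vertex E' w) S = nbhd_set E' S :\ w.
Proof.
move=> wS; rewrite /nbhd_set -bigcupDr; apply: eq_bigr => s sS.
by apply: nbhd_del_vertex; apply: contraNneq wS => <-.
Qed.

Definition deficient u k : bool :=
  [exists S : {set T}, [&& S != set0, S \subset nbhd E' u & #|nbhd_set E' S| + k <= #|S|]].

Lemma deficientP u k :
  reflect (exists S : {set T},
             [/\ S != set0, S \subset nbhd E' u & #|nbhd_set E' S| + k <= #|S|])
          (deficient u k).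
Proof.
by apply: (iffP existsP) => [[S /and3P[]]|[S []]]; exists S => //; apply/and3P.
Qed.

Lemma deficient1P u :
  reflect (exists S : {set T},
             [/\ S != set0, S \subset nbhd E' u & #|nbhd_set E' S| <= #|S| - 1])
          (deficient u 1).
Proof.
apply: (iffP (deficientP u 1)) => -[S [nzS sSN cardS]]; exists S; split=> //;
  by move: nzS cardS; rewrite -card_gt0; lia.
Qed.

Section TightSets.
Variable u : T.
Hypothesis loose : forall S, S != set0 -> S \subset nbhd E' u -> #|S| <= #|nbhd_set E' S|.

Lemma tight_setI S1 S2 : S1 != set0 -> S2 != set0 ->
  S1 \subset nbhd E' u -> S2 \subset nbhd E' u ->
  #|nbhd_set E' S1| <= #|S1| -> #|nbhd_set E' S2| <= #|S2| ->
  S1 :&: S2 != set0 /\ #|nbhd_set E' (S1 :&: S2)| <= #|S1 :&: S2|.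
Proof.
move=> nzS1 nzS2 sS1N sS2N tight1 tight2.
have cardNU : #|nbhd_set E' (S1 :|: S2)| + #|nbhd_set E' S1 :&: nbhd_set E' S2| =
              #|nbhd_set E' S1| + #|nbhd_set E' S2|.
  by rewrite /nbhd_set bigcup_setU cardsUI.
have looseU : #|S1 :|: S2| <= #|nbhd_set E' (S1 :|: S2)|.
  by apply: loose; rewrite ?subUset ?sS1N ?sS2N // setU_eq0 negb_and nzS1.
have := cardsUI S1 S2; have [->|nzI] := eqVneq (S1 :&: S2) set0.
  have : 0 < #|nbhd_set E' S1 :&: nbhd_set E' S2|.
    by apply/card_gt0P; exists u; rewrite inE !nbhd_set_center.
  by rewrite cards0 => *; exfalso; lia.
split=> //; have : nbhd_set E' (S1 :&: S2) \subset nbhd_set E' S1 :&: nbhd_set E' S2.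
  by rewrite subsetI !nbhd_setS ?subsetIl ?subsetIr.
by move/subset_leq_card; lia.
Qed.

End TightSets.

End Neighbourhoods.

Section StrongVertices.
Variables (T : finType) (e : rel T).
Hypotheses (e_sym : symmetric e) (e_irr : irreflexive e).
Local Notation E := (edges e).

Lemma nbhd_edge (E' : {set {set T}}) v w : E' \subset E -> w \in nbhd E' v -> e v w.
Proof. by move=> sE; rewrite inE => /(subsetP sE); rewrite (mem_edges2 e_sym e_irr). Qed.

Lemma deficient_strong (E' : {set {set T}}) u : E' \subset E ->
  deficient E' u 0 -> strong E' u.
Proof.
move=> sE /deficientP[S [nzS sSN]]; rewrite addn0 => tightS M.
case/(maximal_matchingP _ sE) => hM coverE; rewrite /saturates; apply/negPn/negP => uM.
have SM : S \subset cover M.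
  by apply/subsetP=> s /(subsetP sSN); rewrite inE => /coverE; rewrite (negbTE uM).
have mateS : mate M @: S \subset nbhd_set E' S :\ u.
  apply/subsetP=> _ /imsetP[s sS ->]; have sM := subsetP SM s sS.
  rewrite !inE; apply/andP; split.
    by apply: contra uM => /eqP <-; exact: (mate_cover sE hM sM).
  by apply/bigcupP; exists s; rewrite // inE (subsetP hM.1 _ (mateP sE hM sM)).
have := subset_leq_card mateS.
have mateK_S : {in S, cancel (mate M) (mate M)}.
  by move=> s sS; apply: (mateK e_sym e_irr sE hM (subsetP SM s sS)).
rewrite (card_in_imset (can_in_inj mateK_S)).
by have := cardsD1 u (nbhd_set E' S); rewrite (nbhd_set_center nzS sSN); lia.
Qed.

Lemma deficient_square_strong u : deficient E u 1 -> square_strong E u.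
Proof.
case/deficientP=> S [nzS sSN defS]; have uNS := nbhd_set_center nzS sSN.
split=> [|w wN].
  by apply: deficient_strong (subxx _) _; apply/deficientP; exists S; split=> //; lia.
have uw : u != w by apply: contraTneq (nbhd_edge (subxx _) wN) => ->; rewrite e_irr.
apply: deficient_strong (del_vertex_sub _ _) _; apply/deficientP; exists (S :\ w).
have := cardsD1 w S; have := cardsD1 u (nbhd_set E S); rewrite uNS => cardN cardS.
rewrite nbhd_del_vertex // nbhd_set_del_vertex ?setD11 // setSD // -card_gt0.
have : #|nbhd_set E (S :\ w) :\ w| <= #|nbhd_set E S|.
  by apply/subset_leq_card/(subset_trans (subsetDl _ _))/nbhd_setS/subsetDl.
by split=> //; lia.
Qed.

End StrongVertices.

Section Bipartite.
Variables (T : finType) (e : rel T) (U W : {set T}).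
Hypotheses (e_sym : symmetric e) (e_irr : irreflexive e) (hbip : bipartition e U W).
Local Notation E := (edges e).
Implicit Types (S : {set T}) (M : {set {set T}}).

Lemma memW x : (x \in W) = (x \notin U).
Proof.
have [UW0 [UWT _]] := hbip; apply/idP/idP => [xW|xU].
  apply/negP=> xU; have : x \in U :&: W by rewrite inE xU xW.
  by rewrite UW0 inE.
have : x \in U :|: W by rewrite UWT inE.
by rewrite inE (negbTE xU).
Qed.

Lemma edge_UW p q : e p q -> p \in U -> q \in W.
Proof. by case/hbip.2.2=> -[pX qY] // pU; rewrite memW pU in pX. Qed.

Lemma edge_WU p q : e p q -> p \in W -> q \in U.
Proof. by case/hbip.2.2=> -[pX qY] // pW; rewrite memW pX in pW. Qed.

Lemma edge_sideU p q : e p q -> (p \in U) != (q \in U).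
Proof.
move=> epq; have [pU|pW] := boolP (p \in U); first by rewrite -memW (edge_UW epq).
by rewrite -memW in pW; rewrite (edge_WU epq pW).
Qed.

Lemma edge_sideW p q : e p q -> (p \in W) != (q \in W).
Proof. by move/edge_sideU; rewrite !memW; case: (p \in U); case: (q \in U). Qed.

Lemma nbhd_U_W (E' : {set {set T}}) u : E' \subset E -> u \in U -> nbhd E' u \subset W.
Proof. by move=> sE uU; apply/subsetP=> w /(nbhd_edge e_sym e_irr sE)/edge_UW; apply. Qed.

Lemma nbhd_set_W_U (E' : {set {set T}}) S : E' \subset E -> S \subset W ->
  nbhd_set E' S \subset U.
Proof.
move=> sE sSW; apply/bigcupsP=> s sS; apply/subsetP=> t.
by move/(nbhd_edge e_sym e_irr sE)/edge_WU; apply; apply: (subsetP sSW).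
Qed.

Lemma sdr_matching (E' : {set {set T}}) (A : {set T}) (f : T -> T) :
  E' \subset E -> A \subset W ->
  {in A &, injective f} -> {in A, forall a, f a \in nbhd E' a} ->
  is_matching E' [set [set a; f a] | a in A].
Proof.
move=> sE sAW injf fN; split.
  by apply/subsetP=> _ /imsetP[a aA ->]; have := fN a aA; rewrite inE.
have fU a : a \in A -> f a \in U.
  by move=> aA; apply: (edge_WU (nbhd_edge e_sym e_irr sE (fN a aA))); apply: (subsetP sAW).
have aW a : a \in A -> a \notin U by move=> aA; rewrite -memW (subsetP sAW).
apply/trivIset_eqP=> _ _ x /imsetP[a aA ->] /imsetP[b bA ->].
move=> /set2P[]-> /set2P[] => [->//|abf|fab|/injf-> //].
- by have := aW a aA; rewrite abf fU.
- by have := aW b bA; rewrite -fab fU.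
Qed.

Lemma strong_deficient (E' : {set {set T}}) u : E' \subset E -> u \in U ->
  strong E' u -> deficient E' u 0.
Proof.
move=> sE uU strong_u; apply: contraT => notdef.
have [f injf fNb] : has_sdr (fun s => nbhd E' s :\ u) (nbhd E' u).
  apply: hall => S sSN; have [->|nzS] := eqVneq S set0; first by rewrite cards0.
  rewrite bigcupDr -/(nbhd_set E' S).
  have : ~~ (#|nbhd_set E' S| + 0 <= #|S|).
    by apply: contra notdef => tightS; apply/deficientP; exists S.
  by have := cardsD1 u (nbhd_set E' S); rewrite (nbhd_set_center nzS sSN); lia.
have fN a : a \in nbhd E' u -> f a \in nbhd E' a by move/fNb/setD1P=> [].
have [M maxM sM0M] := maximal_matching_sup (sdr_matching sE (nbhd_U_W sE uU) injf fN).
have uM := strong_u M maxM.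
have uvM := mateP sE maxM.1 uM; set v := mate M u in uvM.
have vN : v \in nbhd E' u by rewrite inE (subsetP maxM.1.1 _ uvM).
have vfvM : [set v; f v] \in M by apply/(subsetP sM0M)/imsetP; exists v.
have eqB := trivIset_eq maxM.1.2 vfvM uvM (set21 _ _) (set22 _ _).
have /set2P[uv|ufv] : u \in [set v; f v] by rewrite eqB set21.
  by have := mate_edge e_sym e_irr sE maxM.1 uM; rewrite -/v -uv e_irr.
by have := fNb v vN; rewrite -ufv setD11.
Qed.

Lemma square_strong_deficient u : u \in U -> square_strong E u -> deficient E u 1.
Proof.
move=> uU [strong_u strong_del]; apply: contraT => notdef.
have loose S : S != set0 -> S \subset nbhd E u -> #|S| <= #|nbhd_set E S|.
  move=> nzS sSN; rewrite leqNgt; apply: contra notdef => ltS.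
  by apply/deficientP; exists S; split; rewrite // addn1.
have NW := nbhd_U_W (subxx E) uU.
suff noTight S : S != set0 -> S \subset nbhd E u -> #|nbhd_set E S| <= #|S| -> false.
  case/deficientP: (strong_deficient (subxx _) uU strong_u) => S [nzS sSN].
  by rewrite addn0; apply: noTight.
elim: {S}_.+1 {-2}S (ltnSn #|S|) => // n IH S ltSn nzS sSN tightS.
have [x xS] := set0Pn _ nzS; have xN := subsetP sSN x xS.
have ux : u != x.
  by apply: contraTneq (nbhd_edge e_sym e_irr (subxx _) xN) => ->; rewrite e_irr.
case/deficientP: (strong_deficient (del_vertex_sub E x) uU (strong_del x xN)).
move=> S' [nzS' +]; rewrite nbhd_del_vertex // addn0 => sS'N.
have xS' : x \notin S' by apply/negP=> /(subsetP sS'N); rewrite setD11.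
have sS'W : S' \subset W := subset_trans sS'N (subset_trans (subsetDl _ _) NW).
have xNS' : x \notin nbhd_set E S'.
  have := subsetP NW x xN; rewrite memW; apply: contra.
  exact: subsetP (nbhd_set_W_U (subxx _) sS'W) x.
rewrite nbhd_set_del_vertex // => tightS'.
have {}tightS' : #|nbhd_set E S'| <= #|S'| by rewrite (cardsD1 x) (negbTE xNS').
have sS'N' := subset_trans sS'N (subsetDl _ _).
have [nzI tightI] := tight_setI loose nzS nzS' sSN sS'N' tightS tightS'.
have ltI : #|S :&: S'| < #|S|.
  apply: proper_card; rewrite properE subsetIl.
  by apply/subsetPn; exists x; rewrite // inE (negbTE xS') andbF.
apply: IH tightI => //; last exact: subset_trans (subsetIl _ _) sSN.
by apply: leq_trans ltI _; rewrite -ltnS.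
Qed.

Lemma square_strongP u : u \in U -> square_strong E u <-> deficient E u 1.
Proof.
move=> uU; split; first exact: square_strong_deficient.
exact: deficient_square_strong.
Qed.

End Bipartite.

(** * Alternating reachability *)

Section AlternatingReach.
Variables (T : finType) (e : rel T) (U W : {set T}).
Hypotheses (e_sym : symmetric e) (e_irr : irreflexive e) (hbip : bipartition e U W).
Local Notation E := (edges e).
Implicit Types (M : {set {set T}}) (X : {set T}).

Definition alt_step M X : {set T} :=
  [set x in U | x \notin cover M] :|:
  [set z | [exists x in X, exists y, e x y && ([set y; z] \in M)]].

(* The vertices of U reachable from the M-unmatched vertices of U by M-alternating
   paths, as a least fixpoint. *)
Definition alt_reach M := fixset (alt_step M).

Lemma alt_step_mono M : {homo alt_step M : X Y / X \subset Y}.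
Proof.
move=> X Y sXY; apply/setUS/subsetP=> z; rewrite !inE.
by case/existsP=> x /andP[xX xz]; apply/existsP; exists x; rewrite (subsetP sXY).
Qed.

Lemma alt_step_unmatched M X x : x \in U -> x \notin cover M -> x \in alt_step M X.
Proof. by move=> xU xM; rewrite !inE xU xM. Qed.

Lemma alt_step_edge M X x y z : x \in X -> e x y -> [set y; z] \in M -> z \in alt_step M X.
Proof.
move=> xX exy yzM; rewrite !inE; apply/orP; right.
by apply/existsP; exists x; rewrite xX; apply/existsP; exists y; rewrite exy.
Qed.

Lemma alt_reachE M : alt_step M (alt_reach M) = alt_reach M.
Proof. exact/fixsetK/alt_step_mono. Qed.

Lemma alt_reach_unmatched M x : x \in U -> x \notin cover M -> x \in alt_reach M.
Proof. by rewrite -alt_reachE; apply: alt_step_unmatched. Qed.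

Lemma alt_reach_step M x y z :
  x \in alt_reach M -> e x y -> [set y; z] \in M -> z \in alt_reach M.
Proof. by move=> xZ exy yzM; rewrite -alt_reachE; apply: alt_step_edge xZ exy yzM. Qed.

Lemma iter_alt_step_U M k : is_matching E M -> iter k (alt_step M) set0 \subset U.
Proof.
move=> hM; elim: k => [|k IH] /=; first exact: sub0set.
apply/subsetP=> z; rewrite !inE => /orP[/andP[//]|/existsP[x /andP[xk]]].
case/existsP=> y /andP[exy yzM]; have yW := edge_UW hbip exy (subsetP IH x xk).
have eyz : e y z by rewrite -(mem_edges2 e_sym e_irr) (subsetP hM.1).
exact: (edge_WU hbip eyz yW).
Qed.

Lemma alt_reach_U M : is_matching E M -> alt_reach M \subset U.
Proof. exact: iter_alt_step_U. Qed.

Lemma iter_alt_step_swap M M1 x0 k : is_matching E M ->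
  (forall z, z \in U -> z \in cover M1 -> z \in cover M) ->
  (forall y z, z \in U -> z != x0 -> [set y; z] \in M -> [set y; z] \in M1) ->
  x0 \notin iter k (alt_step M) set0 ->
  iter k (alt_step M) set0 \subset iter k (alt_step M1) set0.
Proof.
move=> hM cover1 edge1; elim: k => [|k IH] x0k /=; first exact: sub0set.
have {}IH := IH (contra (subsetP (subset_iterS (alt_step_mono M) k) x0) x0k).
apply/subsetP=> z /setUP[]; rewrite inE.
  case/andP=> zU zM; apply: (alt_step_unmatched _ zU).
  by apply: contra zM; apply: cover1.
case/existsP=> x /andP[xk /existsP[y /andP[exy yzM]]].
have zk : z \in iter k.+1 (alt_step M) set0 := alt_step_edge xk exy yzM.
have zU := subsetP (iter_alt_step_U k.+1 hM) z zk.
have zx0 : z != x0 by apply: contraNneq x0k => <-.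
exact: (alt_step_edge (subsetP IH x xk) exy (edge1 y z zU zx0 yzM)).
Qed.

Lemma iter_alt_step_nbhd_cover k M x y : maximum_matching E M ->
  x \in iter k (alt_step M) set0 -> e x y -> y \in cover M.
Proof.
elim: k M x y => [|k IH] M x y [hM maxM] xk1 exy; first by rewrite inE in xk1.
have [xk|xk] := boolP (x \in iter k (alt_step M) set0); first exact: IH xk exy.
have xU := subsetP (iter_alt_step_U k.+1 hM) x xk1; have yW := edge_UW hbip exy xU.
have xyE : [set x; y] \in E by rewrite (mem_edges2 e_sym e_irr).
apply: contraT => yM; move: xk1; rewrite /= !inE => /orP[/andP[_ xM]|].
  have [hM' cardM'] := matchingU1 hM xyE xM yM.
  by have := maxM _ hM'; rewrite cardM' ltnn.
case/existsP=> x1 /andP[x1k /existsP[y1 /andP[ex1y1 y1xM]]].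
have y1W := edge_UW hbip ex1y1 (subsetP (iter_alt_step_U k hM) x1 x1k).
(* Trading the matching edge [y1; x] for [x; y] gives a maximum matching M1 in which
   y1 is uncovered while x1 stays reachable one level lower. *)
have xD : x \notin cover M :\: [set y1; x] by rewrite inE set22.
have yD : y \notin cover M :\: [set y1; x] by rewrite inE negb_and yM orbT.
have [hM1 coverM1 cardM1] := matching_exchange hM y1xM xyE xD yD.
set M1 := _ |: _ in hM1 coverM1 cardM1.
have y1M1 : y1 \notin cover M1.
  rewrite coverM1 !inE eqxx orbF negb_or; apply/andP; split.
    by apply: contraTneq y1W => ->; rewrite (memW hbip) xU.
  by apply: contraNneq yM => <-; apply/bigcupP; exists [set y1; x]; rewrite ?set21.
suff : y1 \in cover M1 by rewrite (negbTE y1M1).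
apply: (IH M1 x1 y1) => //.
  by split=> // M' /maxM; rewrite cardM1.
apply: subsetP x1k; apply: (iter_alt_step_swap hM) xk => [z zU|y' z zU zx yzM].
  rewrite coverM1 !inE => /orP[/orP[/eqP->|/eqP zy]|/andP[_ //]].
    by apply/bigcupP; exists [set y1; x]; rewrite ?set22.
  by move: yW; rewrite (memW hbip) -zy zU.
apply/setU1P; right; rewrite !inE yzM andbT; apply/eqP=> eqyz.
have /set2P[zy1|zx'] : z \in [set y1; x] by rewrite -eqyz set22.
  by move: y1W; rewrite (memW hbip) -zy1 zU.
by rewrite zx' eqxx in zx.
Qed.

Lemma alt_reach_nbhd_cover M x y : maximum_matching E M ->
  x \in alt_reach M -> e x y -> y \in cover M.
Proof. exact: iter_alt_step_nbhd_cover. Qed.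

Section ShrinkMaximal.
Variable M : {set {set T}}.
Hypotheses (maxM : maximal_matching E M) (maximumM : maximum_matching E M).
Local Notation Z := (alt_reach M).

Lemma nbhd_alt_reach_cover : nbhd_set E Z \subset cover M.
Proof.
apply/bigcupsP=> x xZ; apply/subsetP=> y /(nbhd_edge e_sym e_irr (subxx _)).
exact: alt_reach_nbhd_cover.
Qed.

Lemma shrink_maximal p q : p \in nbhd_set E Z -> q \notin Z -> q \notin nbhd_set E Z ->
  e p q -> exists2 M', maximal_matching E M' & #|M'| < #|M|.
Proof.
move=> pNZ qZ qNZ epq; have hM := maxM.1; have ZU := subsetP (alt_reach_U hM).
have pM := subsetP nbhd_alt_reach_cover p pNZ.
case/bigcupP: pNZ => p' p'Z /(nbhd_edge e_sym e_irr (subxx _)) ep'p.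
have pW := edge_UW hbip ep'p (ZU p' p'Z); have qU := edge_WU hbip epq pW.
have paM := mateP (subxx _) hM pM; set a := mate M p in paM.
have aZ : a \in Z := alt_reach_step p'Z ep'p paM.
have qM : q \in cover M by apply: contraR qZ; apply: alt_reach_unmatched.
have qcM := mateP (subxx _) hM qM; set c := mate M q in qcM.
have cW : c \in W := edge_UW hbip (mate_edge e_sym e_irr (subxx _) hM qM) qU.
have nbhd_c t : e c t -> t \notin Z.
  move=> ect; apply: contra qZ => tZ.
  by apply: (alt_reach_step tZ (_ : e t c)); rewrite 1?e_sym // setUC.
have cNZ : c \notin nbhd_set E Z.
  apply/bigcupP=> -[t tZ /(nbhd_edge e_sym e_irr (subxx _))].
  by rewrite e_sym => /nbhd_c; rewrite tZ.
have [hM2 coverM2 cardM2] := matchingD1 hM paM.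
have qcM2 : [set q; c] \in M :\ [set p; a].
  rewrite !inE qcM andbT; apply: contraNneq qZ => eq_qc_pa.
  have /set2P[qp|->//] : q \in [set p; a] by rewrite -eq_qc_pa set21.
  by rewrite qp e_irr in epq.
have pD : p \notin cover (M :\ [set p; a]) :\: [set q; c].
  by rewrite coverM2 !inE eqxx andbF.
have qD : q \notin cover (M :\ [set p; a]) :\: [set q; c] by rewrite inE set21.
have pqE : [set p; q] \in E by rewrite (mem_edges2 e_sym e_irr).
have [hMS coverMS cardMS] := matching_exchange hM2 qcM2 pqE pD qD.
set MS := _ |: _ in hMS coverMS cardMS; exists MS; last by rewrite cardMS cardM2.
(* MS uncovers exactly a and c, and every neighbour of a or c stays covered. *)
have keep v : v \in cover M -> v \notin [set a; c] -> v \in cover MS.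
  rewrite coverMS coverM2 !inE negb_or => -> /andP[/negbTE-> /negbTE->].
  by case: (v == p); case: (v == q).
have nbhd_ac v t : v \in [set a; c] -> e v t -> (t \in cover M) && (t \notin [set a; c]).
  case/set2P=> -> evt; rewrite !inE negb_or.
    have tNZ : t \in nbhd_set E Z.
      by apply/bigcupP; exists a; rewrite // inE (mem_edges2 e_sym e_irr).
    rewrite (subsetP nbhd_alt_reach_cover t tNZ) /=; apply/andP; split.
      by apply: contraTneq evt => ->; rewrite e_irr.
    by apply: contraNneq cNZ => <-.
  have tZ := nbhd_c t evt; have tU := edge_WU hbip evt cW.
  rewrite (contraR (alt_reach_unmatched tU) tZ) /=; apply/andP; split.
    by apply: contraNneq tZ => ->.
  by apply: contraTneq evt => ->; rewrite e_irr.
apply/(maximal_matchingP _ (subxx _)); split=> // s t.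
rewrite (mem_edges2 e_sym e_irr) => est.
have [_ coverE] := (maximal_matchingP _ (subxx _)).1 maxM.
have := coverE s t; rewrite (mem_edges2 e_sym e_irr) => /(_ est) stM.
have [sac|sac] := boolP (s \in [set a; c]).
  by case/andP: (nbhd_ac s t sac est) => tM tac; rewrite (keep t) ?orbT.
have [tac|tac] := boolP (t \in [set a; c]).
  by rewrite e_sym in est; case/andP: (nbhd_ac t s tac est) => sM _; rewrite (keep s).
by case/orP: stM => [sM|tM]; [rewrite (keep s) | rewrite (keep t) ?orbT].
Qed.

End ShrinkMaximal.

End AlternatingReach.

(** * Edge-stable equimatchable graphs *)

Section EdgeStable.
Variables (T : finType) (e : rel T) (U W : {set T}).
Hypotheses (e_sym : symmetric e) (e_irr : irreflexive e).
Hypotheses (e_conn : connected_graph e) (hbip : bipartition e U W) (ltUW : #|U| < #|W|).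
Local Notation E := (edges e).

Lemma card_matching_U (E' : {set {set T}}) M : E' \subset E -> is_matching E' M ->
  #|M| = #|cover M :&: U|.
Proof. by move=> sE hM; rewrite (card_cover_side sE hM (edge_sideU hbip)). Qed.

Lemma exists_unmatched_W M : is_matching E M -> exists2 w, w \in W & w \notin cover M.
Proof.
move=> hM; apply/subsetPn; apply: contraL ltUW => sWM; rewrite -leqNgt.
rewrite -(setIidPr sWM) (card_cover_side (subxx _) hM (edge_sideW hbip)).
by rewrite (card_matching_U (subxx _) hM) subset_leq_card ?subsetIr.
Qed.

Theorem equimatchable_strong u : equimatchable E -> u \in U -> strong E u.
Proof.
move=> eqE uU M maxM; rewrite /saturates; apply: contraT => uM.
have maximumM := equimatchable_maximum eqE maxM.
set Z := alt_reach e U M; have ZU := subsetP (alt_reach_U e_sym e_irr hbip maxM.1).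
have NZM := subsetP (nbhd_alt_reach_cover e_sym e_irr hbip maximumM).
have [w wW wM] := exists_unmatched_W maxM.1.
have uY : u \in Z :|: nbhd_set E Z by rewrite inE alt_reach_unmatched.
have wY : w \notin Z :|: nbhd_set E Z.
  rewrite inE negb_or; apply/andP; split; last by apply: contra wM; apply: NZM.
  by apply: contraL wW => /ZU; rewrite (memW hbip) => ->.
have [p [q [pY]]] := connect_cross (e_conn u w) uY wY.
rewrite inE negb_or => /andP[qZ qNZ] epq.
have pNZ : p \in nbhd_set E Z.
  case/setUP: pY => // pZ; case/negP: qNZ; apply/bigcupP; exists p => //.
  by rewrite inE (mem_edges2 e_sym e_irr).
have [M' maxM' ltM'M] := shrink_maximal e_sym e_irr hbip maxM maximumM pNZ qZ qNZ epq.
by rewrite (eqE _ _ maxM' maxM) ltnn in ltM'M.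
Qed.

Lemma edges_UW f : f \in E -> exists u w, [/\ u \in U, w \in W, e u w & f = [set u; w]].
Proof.
case/edgesP=> p [q [epq ->]]; have [pU|pW] := boolP (p \in U).
  by exists p, q; rewrite (edge_UW hbip epq pU).
rewrite -(memW hbip) in pW; exists q, p; rewrite e_sym setUC.
by rewrite (edge_WU hbip epq pW).
Qed.

Lemma cover_U_equimatchable (E' : {set {set T}}) : E' \subset E ->
  (forall M, maximal_matching E' M -> U \subset cover M) -> equimatchable E'.
Proof.
move=> sE coverU M1 M2 max1 max2.
rewrite (card_matching_U sE max1.1) (card_matching_U sE max2.1).
by rewrite (setIidPr (coverU _ max1)) (setIidPr (coverU _ max2)).
Qed.

Lemma square_strong_edge_stable :
  (forall u, u \in U -> square_strong E u) -> edge_stable E.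
Proof.
move=> sq; have coverU M : maximal_matching E M -> U \subset cover M.
  by move=> maxM; apply/subsetP=> u uU; apply: (sq u uU).1.
split=> [|f fE]; first exact: cover_U_equimatchable.
have [u [w [uU _ euw ->]]] := edges_UW fE.
apply: cover_U_equimatchable (subsetDl _ _) _ => M maxM; apply: coverU.
have [uM|uM] := boolP (u \in cover M).
  exact: (maximal_del_edge (subxx _) maxM (set21 _ _) uM).
have [wM|wM] := boolP (w \in cover M).
  exact: (maximal_del_edge (subxx _) maxM (set22 _ _) wM).
have wN : w \in nbhd E u by rewrite inE (mem_edges2 e_sym e_irr).
have := (sq u uU).2 w wN M (maximal_del_edge_del_vertex (subxx _) maxM (set22 _ _) wM).
by rewrite /saturates (negbTE uM).
Qed.

Lemma exists_edge_out f : f \in E -> exists p q, [/\ p \in f, q \notin f & e p q].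
Proof.
have [UW0 [UWT _]] := hbip.
case/edges_UW=> u [w [uU _ euw ->]]; have [z zf] : exists z, z \in ~: [set u; w].
  have uw : u != w by apply: contraTneq euw => ->; rewrite e_irr.
  apply/card_gt0P; have := cardsC [set u; w]; rewrite cards2 uw.
  have := cardsUI U W; rewrite UWT UW0 cards0 cardsT.
  have : 0 < #|U| by apply/card_gt0P; exists u.
  lia.
by apply: connect_cross (e_conn u z) (set21 _ _) _; rewrite inE in zf.
Qed.

Lemma card_matching_lt_U (E' : {set {set T}}) M u : E' \subset E -> is_matching E' M ->
  u \in U -> u \notin cover M -> #|M| < #|U|.
Proof.
move=> sE hM uU uM; rewrite (card_matching_U sE hM); apply: proper_card.
rewrite properEneq subsetIr andbT; apply: contraNneq uM => eqU.
by have := uU; rewrite -eqU => /setIP[].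
Qed.

Lemma exists_saturating_del_edge f : equimatchable E -> f \in E ->
  exists2 N, maximal_matching (del_edge E f) N & #|N| = #|U|.
Proof.
move=> eqE fE; have [p [t [pf tf ept]]] := exists_edge_out fE.
have hG : is_matching E [set [set p; t]].
  by split; [rewrite sub1set (mem_edges2 e_sym e_irr) | exact: trivIset1].
have [N maxN sGN] := maximal_matching_sup hG.
have fN : f \notin N.
  apply: contra tf => fN; have ptN : [set p; t] \in N by rewrite (subsetP sGN) ?set11.
  by rewrite (trivIset_eq maxN.1.2 fN ptN pf (set21 _ _)) set22.
exists N; first exact: maximal_matching_del_edge (subxx _) maxN fN.
rewrite (card_matching_U (subxx _) maxN.1) (setIidPr _) //.
by apply/subsetP=> x xU; exact: equimatchable_strong eqE xU N maxN.
Qed.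

Lemma edge_stable_strong_del_vertex u w : edge_stable E -> u \in U -> w \in nbhd E u ->
  strong (del_vertex E w) u.
Proof.
move=> [eqE eqD] uU wN M maxM; rewrite /saturates; apply: contraT => uM.
set f := [set u; w]; have fE : f \in E by move: wN; rewrite inE.
have sD : del_edge E f \subset E := subsetDl _ _.
have wu : w != u.
  have wW := edge_UW hbip (nbhd_edge e_sym e_irr (subxx _) wN) uU.
  by apply: contraTneq wW => ->; rewrite (memW hbip) uU.
have hMD : is_matching (del_edge E f) M.
  have [sM tM] := maxM.1; split=> //; apply/subsetP=> B /(subsetP sM)/setIdP[BE wB].
  by rewrite !inE BE andbT; apply: contraNneq wB => ->; rewrite set22.
have [M' maxM' sMM'] := maximal_matching_sup hMD.
have uM' : u \notin cover M'.
  apply: contra uM => uM'; have uqM' := mateP sD maxM'.1 uM'.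
  have uqE := subsetP maxM'.1.1 _ uqM'; have /setD1P[uqf _] := uqE.
  have wuq : w \notin [set u; mate M' u].
    by rewrite !inE negb_or wu; apply: contra uqf => /eqP <-.
  have [_ coverV] := (maximal_matchingP _ (del_vertex_sub _ _)).1 maxM.
  have uqV : [set u; mate M' u] \in del_vertex E w by rewrite inE wuq (subsetP sD _ uqE).
  have uqM := sup_matching_mem sD maxM'.1 sMM' coverV uqM' uqV.
  by apply/bigcupP; exists [set u; mate M' u]; rewrite ?set21.
have [N maxN cardN] := exists_saturating_del_edge eqE fE.
have := card_matching_lt_U sD maxM'.1 uU uM'.
by rewrite -cardN (eqD f fE _ _ maxN maxM') ltnn.
Qed.

Lemma edge_stable_square_strong :
  edge_stable E -> forall u, u \in U -> square_strong E u.
Proof.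
move=> es u uU; split; first exact: equimatchable_strong es.1 uU.
by move=> w wN; exact: edge_stable_strong_del_vertex.
Qed.

End EdgeStable.

Theorem proposition5p3 (T : finType) (e : rel T) (U W : {set T}) :
  symmetric e -> irreflexive e ->
  connected_graph e -> bipartition e U W -> #|U| < #|W| ->
  (edge_stable (edges e) <-> (forall u, u \in U -> square_strong (edges e) u)) /\
  ((forall u, u \in U -> square_strong (edges e) u) <->
   (forall u, u \in U -> exists S : {set T},
      [/\ S != set0, S \subset nbhd (edges e) u &
          #|nbhd_set (edges e) S| <= #|S| - 1])).
Proof.
move=> e_sym e_irr e_conn hbip ltUW; split.
  split; first exact: edge_stable_square_strong e_sym e_irr e_conn hbip ltUW.
  exact: square_strong_edge_stable e_sym e_irr hbip.
split=> sq u uU; have sqP := square_strongP e_sym e_irr hbip uU.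
  exact/deficient1P/sqP/sq.
exact/sqP/deficient1P/sq.
Qed.
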